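(* Let $A,B,C$ be the observer canonical realization (described in the context) of a plant $b(s)/a(s)$ that is stable (i.e. $A$ is Hurwitz) and has positive DC gain. Then the first exit time $\tau_+(\xi)$ is finite for every $\xi\in\mathbb{R}^n$.
   Context: The plant transfer function is $\frac{b(s)}{a(s)}=\frac{b_{n-1}s^{n-1}+\dots+b_0}{s^n+a_{n-1}s^{n-1}+\dots+a_0}$ with real coefficients. Its observer canonical realization is: $A$ is the $n\times n$ matrix with $A_{i+1,i}=1$ for $i=1,\dots,n-1$, last column $(-a_0,-a_1,\dots,-a_{n-1})^T$, and all other entries zero; $B=(b_0,b_1,\dots,b_{n-1})^T$; $C=(0,\dots,0,1)$. The plant is stable if $A$ is Hurwitz; its DC gain is $b_0/a_0$. The first exit time from positive sign is $\tau_+(\xi)=\inf\{t>0: Cx(t)<0\}$, where $x(\cdot)$ solves $\dot x=Ax-B$, $x(0)=\xi$. *)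

From HB Require Import structures.
From mathcomp Require Import all_boot all_order all_algebra.
From mathcomp Require Import complex.
From mathcomp Require Import all_classical all_reals all_analysis.
Set Implicit Arguments.
Unset Strict Implicit.
Unset Printing Implicit Defensive.
Import Order.TTheory GRing.Theory Num.Theory.
Local Open Scope ring_scope.

(* Observer canonical realization of b(s)/a(s) with deg a = n.+1:
   a i = a_i, b i = b_i for i = 0..n. Indices are 0-based. *)
Definition obs_A (R : realType) (n : nat) (a : 'I_n.+1 -> R) : 'M[R]_n.+1 :=
  \matrix_(i, j) (if j == ord_max then - a i
                  else if (i == j.+1 :> nat) then 1 else 0).

Definition obs_B (R : realType) (n : nat) (b : 'I_n.+1 -> R) : 'cV[R]_n.+1 :=
  \col_i b i.

Definition obs_C (R : realType) (n : nat) : 'rV[R]_n.+1 :=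
  \row_j (if j == ord_max then 1 else 0).

Definition hurwitz (R : realType) (n : nat) (A : 'M[R]_n.+1) : Prop :=
  forall z : R[i], eigenvalue (map_mx (real_complex R) A) z -> complex.Re z < 0.

Definition is_solution (R : realType) (n : nat) (A : 'M[R]_n.+1)
    (B : 'cV[R]_n.+1) (x : R -> 'cV[R]_n.+1) : Prop :=
  forall (t : R) (k : 'I_n.+1),
    is_derive t 1 (fun s => x s k 0) ((A *m x t - B) k 0).

(* The characteristic polynomial s^(n+1) + a_n s^n + ... + a_0 of the
   observer form is Hurwitz, so it splits over the reals into monic factors
   s - r (r < 0) and s^2 - 2 Re(z) s + |z|^2 (Re z < 0), all with nonnegative
   coefficients and positive constant term; multiplying them out gives
   a_i >= 0 and a_0 > 0 (Stodola's condition), and positivity of the DC gain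
   b_0 / a_0 then gives b_0 > 0.
   If the output y = x_n stayed nonnegative for t > 0, the observer equations
   x_0' = - a_0 y - b_0 and x_(i+1)' = x_i - a_(i+1) y - b_(i+1) would give,
   by induction on i, a derivative of x_i eventually bounded by a negative
   constant, hence x_i -> -oo for every i; for i = n this contradicts y >= 0. *)

From HB Require Import structures.
From mathcomp Require Import all_boot all_order all_algebra.
From mathcomp Require Import complex.
From mathcomp Require Import all_classical all_reals all_analysis.
From mathcomp.algebra_tactics Require Import ring lra.
Import Order.TTheory GRing.Theory Num.Theory numFieldNormedType.Exports.
Local Open Scope classical_set_scope.
Local Open Scope ring_scope.

Section DecreasingRate.
Context {R : realType} {f df : R -> R}.
Hypothesis f_derive : forall t : R, is_derive t 1 f (df t).

Lemma derive_le_neg_bound {a e t : R} : (forall s, a <= s -> df s <= - e) ->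
  a <= t -> f t <= f a - e * (t - a).
Proof.
move=> dfle le_at.
have fc : {within [set` `[a, t]], continuous f}.
  apply: derivable_within_continuous => s _.
  exact: (ex_derive (is_derive := f_derive s)).
have [c /[!in_itv] /= /andP[le_ac _] D] := MVT_segment le_at (fun s _ => f_derive s) fc.
have ta_ge0 : 0 <= t - a by rewrite subr_ge0.
have := ler_wpM2r ta_ge0 (dfle c le_ac).
rewrite -D mulNr; lra.
Qed.

Lemma cvgNy_derive_le_neg {e : R} : 0 < e ->
  (\forall t \near +oo, df t <= - e) -> f t @[t --> +oo] --> -oo.
Proof.
move=> e_gt0 [a [a_real dfle]]; apply/cvgrNyPle => A.
set s := a + 1.
have le_dfs u : s <= u -> df u <= - e by rewrite /s => su; apply: dfle; lra.
near=> t.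
have st : s + (f s - A) / e <= t by near: t; apply: nbhs_pinfty_ge; exact: num_real.
have le_st : s <= t by near: t; apply: nbhs_pinfty_ge; exact: num_real.
have := derive_le_neg_bound le_dfs le_st.
have : f s - A <= e * (t - s) by rewrite -ler_pdivrMl // mulrC lerBrDl.
lra.
Unshelve. all: end_near. Qed.
End DecreasingRate.

Section ObserverForm.
Context {R : realType} {n : nat} (a : 'I_n.+1 -> R).

Lemma mul_obs_C (v : 'cV[R]_n.+1) : (obs_C R n *m v) 0 0 = v ord_max 0.
Proof.
rewrite mxE (bigD1 ord_max) //= !mxE eqxx mul1r big1 ?addr0 // => j /negPf jN.
by rewrite !mxE jN mul0r.
Qed.

Lemma mul_obs_A (v : 'cV[R]_n.+1) (k : 'I_n.+1) :
  (obs_A a *m v) k 0 =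
    (if (k : nat) is i.+1 then v (inord i) 0 else 0) - a k * v ord_max 0.
Proof.
rewrite mxE big_ord_recr /= !mxE eqxx mulNr; congr (_ + _).
have wN (j : 'I_n) : (widen_ord (leqnSn n) j == ord_max) = false.
  by apply/negbTE; rewrite -val_eqE /= neq_ltn ltn_ord.
under eq_bigr => j _ do rewrite !mxE wN.
case: k => -[|i] /= lt_k; first by rewrite big1 // => j _; rewrite mul0r.
rewrite (bigD1 (Ordinal (lt_k : i < n)%N)) //= eqxx mul1r big1 ?addr0.
  by congr (v _ 0); apply/val_inj; rewrite /= inordK // ltnW.
by move=> j; rewrite -val_eqE /= eqSS eq_sym => /negPf ->; rewrite mul0r.
Qed.

Definition obs_char_poly : {poly R} := 'X^(n.+1) + \poly_(i < n.+1) a (inord i).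

Lemma obs_char_poly_monic : obs_char_poly \is monic.
Proof.
rewrite monicE lead_coefDl ?lead_coefXn // size_polyXn.
exact: leq_ltn_trans (size_poly _ _) (ltnSn _).
Qed.

Lemma coef_obs_char_poly (k : 'I_n.+1) : obs_char_poly`_k = a k.
Proof.
by rewrite coefD coefXn coef_poly ltn_ord inord_val (ltn_eqF (ltn_ord k)) add0r.
Qed.

Lemma horner_map_obs_char_poly (z : R[i]) :
  (map_poly (real_complex R) obs_char_poly).[z] =
    z ^+ n.+1 + \sum_(i < n.+1) (a i)%:C%C * z ^+ i.
Proof.
rewrite rmorphD /= map_polyXn.
have -> : map_poly (real_complex R) (\poly_(i < n.+1) a (inord i)) =
          \poly_(i < n.+1) (a (inord i))%:C%C.
  by apply/polyP => k; rewrite coef_map !coef_poly; case: ifP.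
rewrite hornerD hornerXn horner_poly.
by congr (_ + _); apply: eq_bigr => i _; rewrite inord_val.
Qed.

(* (1, z, ..., z^n) is a left eigenvector for every root z. *)
Lemma eigenvalue_obs_A (z : R[i]) :
  root (map_poly (real_complex R) obs_char_poly) z ->
  eigenvalue (map_mx (real_complex R) (obs_A a)) z.
Proof.
rewrite /root horner_map_obs_char_poly addrC addr_eq0 => /eqP sum_az.
apply/eigenvalueP; exists (\row_(j < n.+1) z ^+ j); last first.
  by apply/eqP => /rowP /(_ ord0); rewrite !mxE expr0 => /eqP; rewrite oner_eq0.
apply/rowP => j; rewrite !mxE; under eq_bigr => i _ do rewrite !mxE.
have [->|jN] := eqVneq j ord_max.
  under eq_bigr => i _ do rewrite rmorphN mulrN mulrC.
  by rewrite sumrN sum_az opprK exprS.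
have lt_j1 : (j.+1 < n.+1)%N.
  by rewrite ltnS ltn_neqAle -ltnS ltn_ord andbT; move: jN; rewrite -val_eqE.
rewrite (bigD1 (Ordinal lt_j1)) //= eqxx rmorph1 mulr1 big1 ?addr0 ?exprS //.
by move=> i; rewrite -val_eqE /= => /negPf ->; rewrite rmorph0 mulr0.
Qed.

Lemma is_derive_obs_state {b : 'I_n.+1 -> R} {x : R -> 'cV[R]_n.+1}
    (k : 'I_n.+1) (t : R) :
  is_solution (obs_A a) (obs_B b) x ->
  is_derive t 1 (fun s => x s k 0)
    ((if (k : nat) is i.+1 then x t (inord i) 0 else 0) - a k * x t ord_max 0 - b k).
Proof. by move=> sol; have := sol t k; rewrite mxE mul_obs_A !mxE. Qed.
End ObserverForm.

Section Stodola.
Context {R : realType}.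
Implicit Types (p q : {poly R}) (z : R[i]).

Definition hurwitz_poly p :=
  forall z, root (map_poly (real_complex R) p) z -> complex.Re z < 0.

Definition stodola_coefs p := (forall k, 0 <= p`_k) /\ 0 < p`_0.

Lemma stodola_coefsM p q :
  stodola_coefs p -> stodola_coefs q -> stodola_coefs (p * q).
Proof.
move=> [p_ge0 p0_gt0] [q_ge0 q0_gt0]; split; last by rewrite coef0M mulr_gt0.
by move=> k; rewrite coefM sumr_ge0 // => i _; rewrite mulr_ge0.
Qed.

Lemma stodola_coefs_XsubC (r : R) : r < 0 -> stodola_coefs ('X - r%:P).
Proof.
by move=> r_lt0; split => [[|[|k]]|]; rewrite coefB coefX coefC /=; lra.
Qed.

Definition conj_quad z : {poly R} :=
  'X^2 - (complex.Re z *+ 2) *: 'X + (complex.Re z ^+ 2 + complex.Im z ^+ 2)%:P.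

Lemma map_conj_quad z :
  map_poly (real_complex R) (conj_quad z) = ('X - z%:P) * ('X - (z^*)%:P)%C.
Proof.
rewrite rmorphD rmorphB /= map_polyXn map_polyZ map_polyX map_polyC /=.
have -> : (complex.Re z *+ 2)%:C%C = z + z^*%C by rewrite addcJ rmorphMn mulr_natl.
rewrite add_Re2_Im2 sqr_normc -mul_polyC polyCD polyCM; ring.
Qed.

Lemma conj_quad_monic z : conj_quad z \is monic.
Proof. by rewrite -(map_monic (real_complex R)) map_conj_quad monicMl ?monicXsubC. Qed.

Lemma size_conj_quad z : size (conj_quad z) = 3%N.
Proof.
rewrite -(size_map_poly (real_complex R)) map_conj_quad.
by rewrite size_mul ?polyXsubC_eq0 // !size_XsubC.
Qed.

Lemma stodola_coefs_conj_quad z : complex.Re z < 0 -> stodola_coefs (conj_quad z).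
Proof.
move=> Rez_lt0; split => [[|[|[|k]]]|];
  rewrite !(coefD, coefN, coefXn, coefZ, coefX, coefC) /=; nra.
Qed.

Lemma conj_quad_dvdp p z : complex.Im z != 0 ->
  root (map_poly (real_complex R) p) z -> conj_quad z %| p.
Proof.
move=> Imz_neq0 pz; rewrite -(dvdp_map (real_complex R)) map_conj_quad.
have pzJ : root (map_poly (real_complex R) p) z^*%C.
  rewrite -complex_root_conj -map_poly_comp.
  by rewrite (@eq_map_poly _ _ _ (real_complex R)) // => c; exact: conjc_real.
have zJ_neq : z != z^*%C.
  case: z Imz_neq0 {pz pzJ} => r s /= s_neq0; apply/eqP => -[] /eqP.
  by rewrite -subr_eq0 opprK -mulr2n mulrn_eq0 (negPf s_neq0).
have roots_zzJ : all (root (map_poly (real_complex R) p)) [:: z; z^*%C].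
  by rewrite /= pz pzJ.
have uniq_zzJ : uniq_roots [:: z; z^*%C] by rewrite uniq_rootsE /= inE andbT.
have [q ->] := uniq_roots_prod_XsubC roots_zzJ uniq_zzJ.
by rewrite !big_cons big_nil mulr1 dvdp_mull.
Qed.

Lemma hurwitz_poly_factor {p} : (1 < size p)%N -> hurwitz_poly p ->
  exists2 d, d %| p & [/\ d \is monic, (1 < size d)%N & stodola_coefs d].
Proof.
move=> sp_gt1 hp.
have /closed_rootP [z pz] : size (map_poly (real_complex R) p) != 1%N.
  by rewrite size_map_poly gtn_eqF.
have [Imz_eq0|Imz_neq0] := eqVneq (complex.Im z) 0.
  have zE : z = (complex.Re z)%:C%C by case: z Imz_eq0 {pz} => r s /= ->.
  exists ('X - (complex.Re z)%:P).
    by rewrite dvdp_XsubCl; move: pz; rewrite zE /root horner_map fmorph_eq0.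
  by split; rewrite ?monicXsubC ?size_XsubC //; exact/stodola_coefs_XsubC/hp.
exists (conj_quad z); first exact: conj_quad_dvdp.
split; rewrite ?conj_quad_monic ?size_conj_quad //.
exact/stodola_coefs_conj_quad/hp.
Qed.

Lemma hurwitz_polyMl {p q} : hurwitz_poly (p * q) -> hurwitz_poly p.
Proof. by move=> hpq z pz; apply: hpq; rewrite rmorphM rootM pz. Qed.

Theorem hurwitz_poly_stodola p : p \is monic -> hurwitz_poly p -> stodola_coefs p.
Proof.
move: {2}(size p) (leqnn (size p)) => m; elim: m p => [|m IH] p sp pm hp.
  by move: sp; rewrite leqn0 size_poly_eq0 (negPf (monic_neq0 pm)).
have [sp_le1|sp_gt1] := leqP (size p) 1.
  have -> : p = 1 by move/monicP: pm; rewrite [p]size1_polyC // lead_coefC => ->.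
  by split => [k|]; rewrite coefC ?ltr01 //; case: (k == 0%N); rewrite ?ler01.
have [d /divpK pE [dm sd dS]] := hurwitz_poly_factor sp_gt1 hp.
set q := p %/ d in pE; rewrite -pE in sp pm hp *.
have qm : q \is monic by rewrite -(monicMr q dm).
have sq : (size q <= m)%N.
  move: sp; rewrite size_Mmonic ?monic_neq0 //.
  case: (size d) sd => [|[|k]] // _; rewrite addnS /= addnS ltnS.
  exact/leq_trans/leq_addr.
exact: stodola_coefsM (IH q sq qm (hurwitz_polyMl hp)) dS.
Qed.
End Stodola.

Lemma obs_state_cvgNy {R : realType} {n : nat} {a b : 'I_n.+1 -> R}
    {x : R -> 'cV[R]_n.+1} :
  (forall i, 0 <= a i) -> 0 < b ord0 -> is_solution (obs_A a) (obs_B b) x ->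
  (\forall t \near +oo, 0 <= x t ord_max 0) ->
  forall i, (i <= n)%N -> x t (inord i) 0 @[t --> +oo] --> -oo.
Proof.
move=> a_ge0 b0_gt0 sol y_ge0; elim=> [|i IH] le_in.
  have -> : inord 0 = ord0 :> 'I_n.+1 by apply/val_inj/inordK.
  apply: (cvgNy_derive_le_neg (fun t => is_derive_obs_state a ord0 t sol) b0_gt0).
  near=> t; have yt_ge0 : 0 <= x t ord_max 0 by near: t.
  rewrite /=; have := mulr_ge0 (a_ge0 ord0) yt_ge0; lra.
have /cvgrNy_le /(_ (b (inord i.+1) - 1)) xi_le := IH (ltnW le_in).
apply: (cvgNy_derive_le_neg (fun t => is_derive_obs_state a (inord i.+1) t sol) ltr01).
near=> t; have yt_ge0 : 0 <= x t ord_max 0 by near: t.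
have xit_le : x t (inord i) 0 <= b (inord i.+1) - 1 by near: t.
rewrite inordK //; have := mulr_ge0 (a_ge0 (inord i.+1)) yt_ge0; lra.
Unshelve. all: end_near. Qed.

Lemma obs_output_not_eventually_ge0 {R : realType} {n : nat}
    {a b : 'I_n.+1 -> R} {x : R -> 'cV[R]_n.+1} :
  (forall i, 0 <= a i) -> 0 < b ord0 -> is_solution (obs_A a) (obs_B b) x ->
  ~ (\forall t \near +oo, 0 <= x t ord_max 0).
Proof.
move=> a_ge0 b0_gt0 sol y_ge0.
have := obs_state_cvgNy a_ge0 b0_gt0 sol y_ge0 n (leqnn n).
have -> : inord n = ord_max :> 'I_n.+1 by apply/val_inj/inordK.
move=> /cvgrNy_lt /(_ 0) /(filterI y_ge0) /filter_ex [t [/= yt_ge0]].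
by rewrite ltNge yt_ge0.
Qed.

Theorem mainTheorem1 (R : realType) (n : nat) (a b : 'I_n.+1 -> R) :
  hurwitz (obs_A a) ->
  0 < b ord0 / a ord0 ->
  forall (xi : 'cV[R]_n.+1) (x : R -> 'cV[R]_n.+1),
    x 0 = xi ->
    is_solution (obs_A a) (obs_B b) x ->
    exists t : R, 0 < t /\ (obs_C R n *m x t) 0 0 < 0.
Proof.
move=> hurwitzA dc_gain_gt0 xi x _ sol.
have [coef_ge0 coef0_gt0] : stodola_coefs (obs_char_poly a).
  apply: hurwitz_poly_stodola; first exact: obs_char_poly_monic.
  by move=> z /eigenvalue_obs_A /hurwitzA.
have a_ge0 i : 0 <= a i by rewrite -(coef_obs_char_poly a).
have a0_gt0 : 0 < a ord0 by rewrite -(coef_obs_char_poly a).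
have b0_gt0 : 0 < b ord0 by rewrite -[b ord0](divfK (lt0r_neq0 a0_gt0)) mulr_gt0.
apply: contrapT => no_exit; apply: (obs_output_not_eventually_ge0 a_ge0 b0_gt0 sol).
exists 0; split => // t t_gt0; rewrite leNgt; apply/negP => yt_lt0.
by apply: no_exit; exists t; rewrite mul_obs_C.
Qed.
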